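(* Let $a,b,c\in\mathbb R$. The sine polynomial $a\sin(x)+b\sin(2x)+c\sin(3x)$ is nonnegative for all $x\in[0,\pi]$ if and only if either (i) $|b|\geq 4c$ and $a-2|b|+3c\geq 0$, or (ii) $|b|<4c$ and $a\geq c+\frac{b^2}{4c}$. In all cases, a necessary condition for this nonnegativity is $a\geq |b|$. *)

From Stdlib Require Import Reals.
Open Scope R_scope.

Definition sinpoly (a b c x : R) : R :=
  a * sin x + b * sin (2 * x) + c * sin (3 * x).

(* With t = cos x, sin 2x = 2 sin x t and sin 3x = sin x (4 t^2 - 1), so the
   sine polynomial is sin x times the quadratic q(t) = a - c + 2 b t + 4 c t^2.
   As sin > 0 on (0, pi) and cos maps [0, pi] onto [-1, 1], nonnegativity is
   equivalent to q >= 0 on [-1, 1] (the endpoints by continuity).  If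
   |b| >= 4c the vertex of q lies outside (-1, 1) or q is concave, so the
   minimum is q(-sgn b) = a - 2|b| + 3c; otherwise c > 0 and the minimum is the
   vertex value a - c - b^2/(4c).  Finally q(1/2) = a + b and q(-1/2) = a - b. *)

From Stdlib Require Import Reals Lra Psatz.
Open Scope R_scope.

Definition cos_quad (a b c t : R) : R := a - c + 2 * b * t + 4 * c * t ^ 2.

Lemma sinpoly_sin_cos_quad (a b c x : R) :
  sinpoly a b c x = sin x * cos_quad a b c (cos x).
Proof.
  unfold sinpoly, cos_quad.
  replace (3 * x) with (2 * x + x) by ring.
  rewrite sin_plus, !sin_2a, cos_2a.
  pose proof (sin2_cos2 x) as Hpyth; unfold Rsqr in Hpyth.
  replace (sin x * sin x) with (1 - cos x * cos x) by lra.
  ring.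
Qed.

Lemma cos_quad_opp (a b c t : R) : cos_quad a b c (- t) = cos_quad a (- b) c t.
Proof. unfold cos_quad; ring. Qed.

Lemma continuity_cos_quad (a b c : R) : continuity (cos_quad a b c).
Proof. unfold cos_quad; reg. Qed.

Lemma cos_quad_square (a b c t : R) : c <> 0 ->
  cos_quad a b c t = a - c - b ^ 2 / (4 * c) + 4 * c * (t + b / (4 * c)) ^ 2.
Proof. intros Hc; unfold cos_quad; field; exact Hc. Qed.

Lemma cos_quad_ge_at_m1 (a b c t : R) : 0 <= b -> 4 * c <= b -> -1 <= t <= 1 ->
  cos_quad a b c (-1) <= cos_quad a b c t.
Proof.
  intros Hb Hbc Ht.
  assert (Hdiff : cos_quad a b c t - cos_quad a b c (-1)
                  = (t + 1) * (2 * b + 4 * c * (t - 1))) by (unfold cos_quad; ring).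
  assert (0 <= 2 * b + 4 * c * (t - 1)) by (destruct (Rle_or_lt c 0); nra).
  nra.
Qed.

Lemma continuity_pt_nonneg (f : R -> R) (x0 : R) : continuity_pt f x0 ->
  (forall d, 0 < d -> exists t, t <> x0 /\ Rabs (t - x0) < d /\ 0 <= f t) ->
  0 <= f x0.
Proof.
  intros Hf Hnear.
  destruct (Rle_or_lt 0 (f x0)) as [|Hneg]; [assumption|].
  destruct (Hf (- f x0) ltac:(lra)) as (d & Hd & Hclose).
  destruct (Hnear d Hd) as (t & Ht & Htd & Hft).
  specialize (Hclose t (conj (conj I (not_eq_sym Ht)) Htd)).
  simpl in Hclose; unfold R_dist in Hclose.
  pose proof (Rle_abs (f t - f x0)); lra.
Qed.

Lemma nonneg_closed_of_open (f : R -> R) (l u : R) : l < u -> continuity f ->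
  (forall t, l < t < u -> 0 <= f t) -> forall t, l <= t <= u -> 0 <= f t.
Proof.
  intros Hlu Hf Hopen t [Hl Hu].
  assert (Hstep : forall d, 0 < d -> 0 < Rmin (d / 2) ((u - l) / 2) < d /\
                                     Rmin (d / 2) ((u - l) / 2) < u - l).
  { intros d Hd; pose proof (Rmin_l (d / 2) ((u - l) / 2));
      pose proof (Rmin_r (d / 2) ((u - l) / 2));
      pose proof (Rmin_pos (d / 2) ((u - l) / 2)); lra. }
  destruct Hl as [Hl | <-]; [destruct Hu as [Hu | ->]|].
  - apply Hopen; lra.
  - apply continuity_pt_nonneg; [apply Hf|].
    intros d Hd; destruct (Hstep d Hd) as [[Hm0 Hmd] Hmlu].
    exists (u - Rmin (d / 2) ((u - l) / 2)).
    split; [lra|]; split; [rewrite Rabs_left by lra; lra | apply Hopen; lra].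
  - apply continuity_pt_nonneg; [apply Hf|].
    intros d Hd; destruct (Hstep d Hd) as [[Hm0 Hmd] Hmlu].
    exists (l + Rmin (d / 2) ((u - l) / 2)).
    split; [lra|]; split; [rewrite Rabs_right by lra; lra | apply Hopen; lra].
Qed.

Definition cos_quad_nonneg (a b c : R) : Prop :=
  forall t, -1 <= t <= 1 -> 0 <= cos_quad a b c t.

Lemma sinpoly_nonneg_iff (a b c : R) :
  (forall x, 0 <= x <= PI -> 0 <= sinpoly a b c x) <-> cos_quad_nonneg a b c.
Proof.
  split.
  - intros Hsin; unfold cos_quad_nonneg.
    apply (nonneg_closed_of_open _ (-1) 1); [lra | apply continuity_cos_quad |].
    intros t Ht.
    pose proof (acos_bound_lt t Ht) as Hacos.
    assert (Hsin_pos : 0 < sin (acos t)) by (apply sin_gt_0; lra).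
    pose proof (Hsin (acos t) ltac:(lra)) as Hx.
    rewrite sinpoly_sin_cos_quad, cos_acos in Hx by lra.
    nra.
  - intros Hq x Hx.
    rewrite sinpoly_sin_cos_quad.
    apply Rmult_le_pos; [apply sin_ge_0; lra | apply Hq, COS_bound].
Qed.

Lemma cos_quad_nonneg_opp (a b c : R) :
  cos_quad_nonneg a (- b) c <-> cos_quad_nonneg a b c.
Proof.
  split; intros Hq t Ht.
  - rewrite <- (Ropp_involutive b), <- cos_quad_opp; apply Hq; lra.
  - rewrite <- cos_quad_opp; apply Hq; lra.
Qed.

Lemma cos_quad_nonneg_iff_pos (a b c : R) : 0 <= b ->
  cos_quad_nonneg a b c <->
    ((b >= 4 * c /\ a - 2 * b + 3 * c >= 0) \/
     (b < 4 * c /\ a >= c + b ^ 2 / (4 * c))).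
Proof.
  intros Hb; split.
  - intros Hq.
    assert (Hm1 : 0 <= a - 2 * b + 3 * c).
    { pose proof (Hq (-1) ltac:(lra)) as H; unfold cos_quad in H; lra. }
    destruct (Rle_or_lt (4 * c) b) as [Hbc | Hbc]; [left; lra | right].
    assert (Hc : 0 < c) by lra.
    assert (Hvertex : -1 <= - b / (4 * c) <= 1).
    { split; apply (Rmult_le_reg_r (4 * c)); try lra; field_simplify; lra. }
    pose proof (Hq _ Hvertex) as H.
    rewrite cos_quad_square in H by lra.
    replace (- b / (4 * c) + b / (4 * c)) with 0 in H by (field; lra).
    split; lra.
  - intros [[Hbc Ha] | [Hbc Ha]] t Ht.
    + pose proof (cos_quad_ge_at_m1 a b c t Hb ltac:(lra) Ht).
      unfold cos_quad at 1 in H; lra.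
    + assert (Hc : 0 < c) by lra.
      rewrite cos_quad_square by lra.
      pose proof (pow2_ge_0 (t + b / (4 * c))); nra.
Qed.

Lemma cos_quad_nonneg_iff (a b c : R) :
  cos_quad_nonneg a b c <->
    ((Rabs b >= 4 * c /\ a - 2 * Rabs b + 3 * c >= 0) \/
     (Rabs b < 4 * c /\ a >= c + b ^ 2 / (4 * c))).
Proof.
  destruct (Rle_or_lt 0 b) as [Hb | Hb].
  - rewrite Rabs_right by lra; apply cos_quad_nonneg_iff_pos, Hb.
  - rewrite Rabs_left, <- cos_quad_nonneg_opp by lra.
    replace (b ^ 2) with ((- b) ^ 2) by ring.
    apply cos_quad_nonneg_iff_pos; lra.
Qed.

Lemma cos_quad_nonneg_abs (a b c : R) : cos_quad_nonneg a b c -> a >= Rabs b.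
Proof.
  intros Hq.
  pose proof (Hq (1 / 2) ltac:(lra)) as Hplus.
  pose proof (Hq (- (1 / 2)) ltac:(lra)) as Hminus.
  unfold cos_quad in Hplus, Hminus.
  unfold Rabs; destruct (Rcase_abs b); lra.
Qed.

Theorem corollary1 (a b c : R) :
  ((forall x : R, 0 <= x <= PI -> 0 <= sinpoly a b c x) <->
     ((Rabs b >= 4 * c /\ a - 2 * Rabs b + 3 * c >= 0) \/
      (Rabs b < 4 * c /\ a >= c + b ^ 2 / (4 * c))))
  /\ ((forall x : R, 0 <= x <= PI -> 0 <= sinpoly a b c x) -> a >= Rabs b).
Proof.
  rewrite sinpoly_nonneg_iff.
  split; [apply cos_quad_nonneg_iff | apply cos_quad_nonneg_abs].
Qed.
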